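(* Let $(M,g)$ be an FRW space-time with comoving vector $u$, $H=\dot a/a$, mimetic field $\phi=t$ (so $u_k=-\nabla_k\phi$, $\chi:=\square\phi=-3H$), let $\gamma$ be a constant and $\zeta(t),V(t)$ smooth functions such that the tensor $$X_{kl}=g_{kl}\big[V+\gamma\nabla_p\chi\nabla^p\phi\big]+2\zeta\nabla_k\phi\nabla_l\phi-\gamma\big[\nabla_k\phi\nabla_l\chi+\nabla_k\chi\nabla_l\phi\big]$$ is divergence-free. Then $X_{kl}=2(\zeta+3\gamma\dot H)u_ku_l+(V+3\gamma\dot H)g_{kl}$, and the tensor $$\mathscr C_{kl}=2(\zeta+3\gamma\dot H)u_ku_l+\frac13(2\zeta-V+3\gamma\dot H)g_{kl}$$ is a Codazzi tensor with $X_{kl}=\mathscr C_{kl}-g_{kl}\mathscr C^r{}_r$. Hence the field equations $R_{kl}-\frac12Rg_{kl}=T_{kl}+X_{kl}$ are Cotton gravity equations in Codazzi form.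
   Context: FRW space-time: $ds^2=-dt^2+a(t)^2g^\star_{\mu\nu}(\mathbf x)dx^\mu dx^\nu$ with $g^\star$ a 3-dimensional Riemannian metric of constant curvature, $a>0$, $H=\dot a/a$, $u=\partial_t$ ($u_k=-\nabla_kt$), dot $=d/dt$, $\square=\nabla^k\nabla_k$. A symmetric tensor $\mathscr C$ is Codazzi if $\nabla_j\mathscr C_{kl}=\nabla_k\mathscr C_{jl}$. *)

From HB Require Import structures.
From mathcomp Require Import all_boot all_order all_algebra.
From mathcomp Require Import all_classical all_reals all_analysis.
Set Implicit Arguments. Unset Strict Implicit. Unset Printing Implicit Defensive.
Import Order.TTheory GRing.Theory Num.Theory.
Import numFieldNormedType.Exports.
Local Open Scope ring_scope.
Local Open Scope classical_set_scope.

Definition ei {R : realType} (n : nat) (i : 'I_n) : 'rV[R]_n := delta_mx 0 i.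

Definition pd {R : realType} (n : nat) (i : 'I_n) (f : 'rV[R]_n -> R)
  (x : 'rV[R]_n) : R := derive f x (ei i).

Fixpoint iter_pd {R : realType} (n : nat) (l : seq 'I_n) (f : 'rV[R]_n -> R)
  : 'rV[R]_n -> R :=
  match l with
  | [::] => f
  | i :: l' => pd i (iter_pd l' f)
  end.

Definition smooth_on {R : realType} (n : nat) (U : set 'rV[R]_n)
  (f : 'rV[R]_n -> R) : Prop :=
  forall (l : seq 'I_n) (x : 'rV[R]_n), U x ->
    (forall i : 'I_n, derivable (iter_pd l f) x (ei i)) /\
    {for x, continuous (iter_pd l f)}.

Definition smooth1_on {R : realType} (I : set R) (f : R -> R) : Prop :=
  forall (k : nat) (t : R), I t -> derivable (iter k (fun h => derive1 h) f) t 1.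

Definition metric (R : realType) (n : nat) := 'I_n -> 'I_n -> 'rV[R]_n -> R.

Definition gmx {R : realType} (n : nat) (g : metric R n) (x : 'rV[R]_n) : 'M[R]_n :=
  \matrix_(i, j) g i j x.

Definition ginv {R : realType} (n : nat) (g : metric R n) (x : 'rV[R]_n) (i j : 'I_n) : R :=
  invmx (gmx g x) i j.

Definition Gam {R : realType} (n : nat) (g : metric R n) (k i j : 'I_n)
  (x : 'rV[R]_n) : R :=
  2^-1 * \sum_(l < n) ginv g x k l *
     (pd i (g l j) x + pd j (g l i) x - pd l (g i j) x).

Definition covD1 {R : realType} (n : nat) (g : metric R n)
  (w : 'I_n -> 'rV[R]_n -> R) (j k : 'I_n) (x : 'rV[R]_n) : R :=
  pd j (w k) x - \sum_(m < n) Gam g m j k x * w m x.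

Definition covD2 {R : realType} (n : nat) (g : metric R n)
  (T : 'I_n -> 'I_n -> 'rV[R]_n -> R) (j k l : 'I_n) (x : 'rV[R]_n) : R :=
  pd j (T k l) x
  - \sum_(m < n) (Gam g m j k x * T m l x + Gam g m j l x * T k m x).

Definition box {R : realType} (n : nat) (g : metric R n) (f : 'rV[R]_n -> R)
  (x : 'rV[R]_n) : R :=
  \sum_(j < n) \sum_(k < n) ginv g x j k * covD1 g (fun k => pd k f) j k x.

(* Riemann tensor R^l_{ijk}, with R(d_i,d_j)d_k = R^l_{ijk} d_l *)
Definition Riem {R : realType} (n : nat) (g : metric R n) (l i j k : 'I_n)
  (x : 'rV[R]_n) : R :=
  pd i (Gam g l j k) x - pd j (Gam g l i k) x
  + \sum_(m < n) (Gam g l i m x * Gam g m j k x - Gam g l j m x * Gam g m i k x).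

Definition const_curvature {R : realType} (n : nat) (g : metric R n)
  (U : set 'rV[R]_n) : Prop :=
  exists K : R, forall (l i j k : 'I_n) (y : 'rV[R]_n), U y ->
    Riem g l i j k y = K * ((l == i)%:R * g j k y - (l == j)%:R * g i k y).

Definition codazzi_on {R : realType} (n : nat) (g : metric R n)
  (C : 'I_n -> 'I_n -> 'rV[R]_n -> R) (D : set 'rV[R]_n) : Prop :=
  forall (j k l : 'I_n) (x : 'rV[R]_n), D x -> covD2 g C j k l x = covD2 g C k j l x.

Definition divfree_on {R : realType} (n : nat) (g : metric R n)
  (X : 'I_n -> 'I_n -> 'rV[R]_n -> R) (D : set 'rV[R]_n) : Prop :=
  forall (l : 'I_n) (x : 'rV[R]_n), D x ->
    \sum_(j < n) \sum_(k < n) ginv g x j k * covD2 g X j k l x = 0.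

Definition time {R : realType} (x : 'rV[R]_4) : R := x 0 ord0.
Definition spat {R : realType} (x : 'rV[R]_4) : 'rV[R]_3 := \row_(j < 3) x 0 (lift ord0 j).

(* ds^2 = -dt^2 + a(t)^2 gs_{mu nu}(x) dx^mu dx^nu *)
Definition frw {R : realType} (a : R -> R) (gs : metric R 3) : metric R 4 :=
  fun i j x =>
    match unlift ord0 i, unlift ord0 j with
    | Some i', Some j' => a (time x) ^+ 2 * gs i' j' (spat x)
    | None, None => -1
    | _, _ => 0
    end.

Definition Hub {R : realType} (a : R -> R) (t : R) : R := derive1 a t / a t.
Definition Hdot {R : realType} (a : R -> R) (t : R) : R := derive1 (Hub a) t.

Definition ucov {R : realType} (k : 'I_4) (x : 'rV[R]_4) : R := - pd k (@time R) x.

Definition Xmim {R : realType} (g : metric R 4) (phi : 'rV[R]_4 -> R) (gam : R)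
  (V zeta : R -> R) (k l : 'I_4) (x : 'rV[R]_4) : R :=
  g k l x * (V (time x) + gam * \sum_(p < 4) \sum_(q < 4)
                 ginv g x p q * pd p (box g phi) x * pd q phi x)
  + 2 * zeta (time x) * pd k phi x * pd l phi x
  - gam * (pd k phi x * pd l (box g phi) x + pd k (box g phi) x * pd l phi x).

Definition trace2 {R : realType} (n : nat) (g : metric R n)
  (C : 'I_n -> 'I_n -> 'rV[R]_n -> R) (x : 'rV[R]_n) : R :=
  \sum_(r < n) \sum_(s < n) ginv g x r s * C r s x.

From HB Require Import structures.
From mathcomp Require Import all_boot all_order all_algebra.
From mathcomp Require Import all_classical all_reals all_analysis.
From mathcomp Require Import ring.
Import Order.TTheory GRing.Theory Num.Theory.
Import numFieldNormedType.Exports.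
Local Open Scope ring_scope.
Local Open Scope classical_set_scope.

(* In comoving coordinates [d t] is the covector [delta_0 = - u], the inverse metric
   has [g^{0k} = - delta_0^k], and the Christoffel symbols with upper index 0 are
   [Gamma^0_jk = H (g_jk + u_j u_k)].  Hence [box t = -3 H], so [X] has the perfect
   fluid form [P(t) u u + Q(t) g] with [P = 2 (zeta + 3 gam Hdot)], [Q = V + 3 gam Hdot].
   For any tensor of this form [nabla g = 0] and [nabla_j u_k = H (g_jk + u_j u_k)]
   give [nabla_j Y_kl = - u_j (P' u_k u_l + Q' g_kl) + P H (h_jk u_l + h_jl u_k)]
   with [h = g + u u].  Contracting with [g^jk] at [l = 0], the vanishing divergence
   of [X] reads [P' - Q' = -3 P H].  The tensor [C] is [P u u + B g] with
   [B = (P - Q) / 3], so [B' = - P H] and [nabla_j C_kl] becomes symmetric in [j, k];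
   finally [C^r_r = 4 B - P] and [B - C^r_r = Q] give [X = C - g C^r_r]. *)

Section DirectionalDerivative.
Context {R : realType} {V : normedModType R}.

Lemma derive_along_line (W : normedModType R) (f : V -> R) (F : W -> R) x v z w :
  (forall h : R, f (h *: v + x) = F (h *: w + z)) ->
  'D_v f x = 'D_w F z /\ (derivable f x v <-> derivable F z w).
Proof.
move=> fF; have fxFz : f x = F z by have := fF 0; rewrite !scale0r !add0r.
rewrite /derive /derivable.
suff -> : (fun h : R => h^-1 *: ((f \o shift x) (h *: v) - f x)) =
          (fun h : R => h^-1 *: ((F \o shift z) (h *: w) - F z)) by [].
by apply: funext => h /=; rewrite fxFz fF.
Qed.

Lemma derive_near_line {f g : V -> R} {x v} :
  (\forall h \near 0, f (h *: v + x) = g (h *: v + x)) ->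
  'D_v f x = 'D_v g x /\ (derivable f x v <-> derivable g x v).
Proof.
move=> fg.
have line (k : V -> R) :
    'D_v k x = 'D_1 (fun s : R => k (s *: v + x)) 0 /\
    (derivable k x v <-> derivable (fun s : R => k (s *: v + x)) 0 1).
  apply: (@derive_along_line _ k (fun s : R => k (s *: v + x)) x v 0 1) => h.
  by rewrite addr0 -[h *: 1]/(h * 1) mulr1.
have [-> ->] := line f; have [-> ->] := line g.
split; first exact: near_eq_derive.
by split; apply: near_eq_derivable => //; apply: filterS fg.
Qed.

Lemma open_near_line {U : set V} {y} (w : V) :
  open U -> U y -> \forall h \near (0 : R), U (h *: w + y).
Proof.
move=> oU Uy.
have line_cvg : (fun h : R => h *: w + y) @ 0 --> y.
  have := cvgD (@scalel_continuous _ _ w 0) (cvg_cst y).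
  by rewrite scale0r add0r; apply.
exact/line_cvg/open_nbhs_nbhs.
Qed.

Lemma deriveM_fun {f g : V -> R} {x v} : derivable f x v -> derivable g x v ->
  'D_v (fun y => f y * g y) x = f x * 'D_v g x + g x * 'D_v f x.
Proof. exact: deriveM. Qed.

Lemma derivableM_fun {f g : V -> R} {x v} : derivable f x v -> derivable g x v ->
  derivable (fun y => f y * g y) x v.
Proof. exact: derivableM. Qed.

Lemma derivableD_fun {f g : V -> R} {x v} : derivable f x v -> derivable g x v ->
  derivable (fun y => f y + g y) x v.
Proof. exact: derivableD. Qed.

Lemma derivableN_fun {f : V -> R} {x v} : derivable f x v ->
  derivable (fun y => - f y) x v.
Proof. exact: derivableN. Qed.

End DirectionalDerivative.

Section MetricInverse.
Context {R : realType} {n : nat}.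

Lemma posdef_unitmx (A : 'M[R]_n) :
  (forall v : 'rV[R]_n, v != 0 -> 0 < (v *m A *m v^T) 0 0) -> A \in unitmx.
Proof.
move=> posA; rewrite unitmxE unitfE; apply/negP => /det0P [v nv vA].
by have := posA v nv; rewrite vA mul0mx mxE ltxx.
Qed.

Variables (g : metric R n) (x : 'rV[R]_n).
Hypothesis gx_unit : gmx g x \in unitmx.
Hypothesis gx_sym : forall i j, g i j x = g j i x.

Lemma sum_g_ginv l l' : \sum_(m < n) g l m x * ginv g x m l' = (l == l')%:R.
Proof.
have := congr1 (fun M : 'M[R]_n => M l l') (mulmxV gx_unit).
by rewrite !mxE => <-; apply: eq_bigr => m _; rewrite /ginv mxE.
Qed.

Lemma sum_ginv_g : \sum_(j < n) \sum_(k < n) ginv g x j k * g j k x = n%:R.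
Proof.
rewrite exchange_big /=.
under eq_bigr => k _ do (under eq_bigr => j _ do rewrite gx_sym mulrC).
under eq_bigr => k _ do rewrite sum_g_ginv eqxx.
by rewrite sumr_const card_ord.
Qed.

Lemma sum_Gam_g j k l : \sum_(m < n) Gam g m j k x * g m l x =
  2^-1 * (pd j (g l k) x + pd k (g l j) x - pd l (g j k) x).
Proof.
rewrite /Gam.
under eq_bigr => m _ do rewrite -mulrA mulr_suml.
rewrite -mulr_sumr exchange_big /=; congr (_ * _).
under eq_bigr => l' _ do
  (under eq_bigr => m _ do rewrite mulrAC (gx_sym m l) (mulrC (ginv g x m l'))).
under eq_bigr => l' _ do rewrite -mulr_suml sum_g_ginv.
rewrite (bigD1 l) //= eqxx mul1r big1 ?addr0 // => l' /negbTE.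
by rewrite eq_sym => ->; rewrite mul0r.
Qed.

End MetricInverse.

Lemma covD2_near_line {R : realType} {n : nat} (g : metric R n)
    (Y Z : 'I_n -> 'I_n -> 'rV[R]_n -> R) j k l x :
  (forall m p, Y m p x = Z m p x) ->
  (\forall h \near 0, Y k l (h *: ei j + x) = Z k l (h *: ei j + x)) ->
  covD2 g Y j k l x = covD2 g Z j k l x.
Proof.
move=> YZx YZnear; rewrite /covD2 /pd.
have [-> _] := derive_near_line YZnear.
by under eq_bigr => m _ do rewrite !YZx.
Qed.

Section ComovingCoordinates.
Context {R : realType}.

(* [dtime i = d_i t = - u_i] *)
Definition dtime (i : 'I_4) : R := (i == ord0)%:R.

Lemma dtime0 : dtime ord0 = 1. Proof. by rewrite /dtime eqxx. Qed.
Lemma dtimeS (j : 'I_3) : dtime (lift ord0 j) = 0. Proof. by []. Qed.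

Lemma time_shift (j : 'I_4) (h : R) (x : 'rV[R]_4) :
  time (h *: ei j + x) = h * dtime j + time x.
Proof. by rewrite /time /ei /dtime !mxE eqxx /= eq_sym. Qed.

Lemma spat_shift0 (h : R) (x : 'rV[R]_4) : spat (h *: ei ord0 + x) = spat x.
Proof. by apply/rowP => k; rewrite /spat /ei !mxE /= mulr0 add0r. Qed.

Lemma spat_shiftS (j : 'I_3) (h : R) (x : 'rV[R]_4) :
  spat (h *: ei (lift ord0 j) + x) = h *: ei j + spat x.
Proof.
by apply/rowP => k; rewrite /spat /ei !mxE /= (inj_eq (@lift_inj _ ord0)).
Qed.

Lemma pd_comp_time (F : R -> R) (j : 'I_4) (x : 'rV[R]_4) :
  derivable F (time x) 1 ->
  pd j (fun z => F (time z)) x = dtime j * 'D_1 F (time x) /\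
  derivable (fun z => F (time z)) x (ei j).
Proof.
move=> dF; rewrite /pd; case: (unliftP ord0 j) => [j'|] ->.
- have [-> ->] := @derive_along_line _ _ _ (fun z => F (time z))
     (fun _ : R => F (time x)) x (ei (lift ord0 j')) 0 1
     ltac:(by move=> h /=; rewrite time_shift dtimeS mulr0 add0r).
  by rewrite dtimeS mul0r; split; [exact: derive_cst | exact: derivable_cst].
- have [-> ->] := @derive_along_line _ _ _ (fun z => F (time z)) F
     x (ei ord0) (time x) 1
     ltac:(by move=> h /=; rewrite time_shift dtime0 -[h *: 1]/(h * 1) !mulr1).
  by rewrite dtime0 mul1r.
Qed.

Lemma pd_time (j : 'I_4) (x : 'rV[R]_4) : pd j (@time R) x = dtime j.
Proof.
have [-> _] := @pd_comp_time id j x (@derivable_id _ _ _ _).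
by rewrite derive_id mulr1.
Qed.

Lemma sum_mul_dtime (F : 'I_4 -> R) : \sum_(m < 4) F m * dtime m = F ord0.
Proof.
by rewrite big_ord_recl dtime0 mulr1 big1 ?addr0 // => m _; rewrite dtimeS mulr0.
Qed.

Lemma sum_mul_dtime2 (F : 'I_4 -> 'I_4 -> R) :
  \sum_(j < 4) \sum_(k < 4) F j k * (dtime j * dtime k) = F ord0 ord0.
Proof.
under eq_bigr => j _ do (under eq_bigr => k _ do rewrite mulrA).
under eq_bigr => j _ do rewrite sum_mul_dtime.
exact: (sum_mul_dtime (fun j => F j ord0)).
Qed.

End ComovingCoordinates.

Section FRWMetric.
Context {R : realType} (a : R -> R) (gs : metric R 3).

Lemma frw00 : frw a gs ord0 ord0 = fun _ => -1.
Proof. by apply: funext => x; rewrite /frw unlift_none. Qed.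
Lemma frw0S j : frw a gs ord0 (lift ord0 j) = fun _ => 0.
Proof. by apply: funext => x; rewrite /frw unlift_none liftK. Qed.
Lemma frwS0 j : frw a gs (lift ord0 j) ord0 = fun _ => 0.
Proof. by apply: funext => x; rewrite /frw unlift_none liftK. Qed.
Lemma frwSS i j : frw a gs (lift ord0 i) (lift ord0 j) =
  fun x => a (time x) ^+ 2 * gs i j (spat x).
Proof. by apply: funext => x; rewrite /frw !liftK. Qed.

Lemma frw_k0 k x : frw a gs k ord0 x = - dtime k.
Proof.
by case: (unliftP ord0 k) => [k'|] ->; rewrite ?frw00 ?frwS0 ?dtime0 ?dtimeS ?oppr0.
Qed.

Lemma frw_sym : (forall i j y, gs i j y = gs j i y) ->
  forall k l, frw a gs k l = frw a gs l k.
Proof.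
move=> gsym k l.
case: (unliftP ord0 k) => [k'|] ->; case: (unliftP ord0 l) => [l'|] ->;
  rewrite ?frw00 ?frw0S ?frwS0 ?frwSS //.
by apply: funext => x; rewrite gsym.
Qed.

Lemma pd_frw0 k j x : pd j (frw a gs ord0 k) x = 0.
Proof.
by case: (unliftP ord0 k) => [k'|] ->; rewrite ?frw00 ?frw0S; exact: derive_cst.
Qed.

Lemma pd0_frw k l x : derivable a (time x) 1 -> a (time x) != 0 ->
  pd ord0 (frw a gs k l) x =
  2 * Hub a (time x) * (frw a gs k l x + dtime k * dtime l).
Proof.
move=> da a_neq0.
case: (unliftP ord0 k) => [k'|] ->; case: (unliftP ord0 l) => [l'|] ->;
  rewrite ?frw00 ?frw0S ?frwS0 ?frwSS ?dtime0 ?dtimeS /pd ?derive_cst;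
  rewrite ?(addr0, mulr0, mulr1, addNr) //.
have [-> _] := @derive_along_line _ _ _ (fun x => a (time x) ^+ 2 * gs k' l' (spat x))
  (fun s => a s * a s * gs k' l' (spat x)) x (ei ord0) (time x) 1
  ltac:(by move=> h /=; rewrite time_shift dtime0 spat_shift0 -[h *: 1]/(h * 1)
                                !mulr1 expr2).
rewrite deriveM_fun; [|exact: derivableM_fun|exact: derivable_cst].
rewrite deriveM_fun // derive_cst /cst mulr0 add0r /Hub derive1E.
by field.
Qed.

Lemma derivable_frw k l j x : derivable a (time x) 1 ->
  (forall i' j' k', derivable (gs i' j') (spat x) (ei k')) ->
  derivable (frw a gs k l) x (ei j).
Proof.
move=> da dgs.
case: (unliftP ord0 k) => [k'|] ->; case: (unliftP ord0 l) => [l'|] ->;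
  rewrite ?frw00 ?frw0S ?frwS0 ?frwSS; last 3 first.
- exact: (@derivable_cst _ _ _ 0 x (ei j)).
- exact: (@derivable_cst _ _ _ 0 x (ei j)).
- exact: (@derivable_cst _ _ _ (-1 : R) x (ei j)).
case: (unliftP ord0 j) => [j'|] ->.
- have [_ ->] := @derive_along_line _ _ _ (fun x => a (time x) ^+ 2 * gs k' l' (spat x))
     (fun w => a (time x) ^+ 2 * gs k' l' w) x (ei (lift ord0 j')) (spat x) (ei j')
     ltac:(by move=> h /=; rewrite time_shift dtimeS spat_shiftS mulr0 add0r).
  exact: derivableM_fun (derivable_cst _ _ _) (dgs k' l' j').
- have [_ ->] := @derive_along_line _ _ _ (fun x => a (time x) ^+ 2 * gs k' l' (spat x))
     (fun s => a s * a s * gs k' l' (spat x)) x (ei ord0) (time x) 1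
     ltac:(by move=> h /=; rewrite time_shift dtime0 spat_shift0 -[h *: 1]/(h * 1)
                                   !mulr1 expr2).
  by apply: derivableM_fun; [exact: derivableM_fun | exact: derivable_cst].
Qed.

End FRWMetric.

Section FRWAtPoint.
Context {R : realType} (a : R -> R) (gs : metric R 3).
Hypothesis gs_sym : forall i j y, gs i j y = gs j i y.
Variable x : 'rV[R]_4.
Hypothesis da : derivable a (time x) 1.
Hypothesis a_neq0 : a (time x) != 0.
Hypothesis gs_unit : gmx gs (spat x) \in unitmx.

Definition frw_inv : 'M[R]_4 := \matrix_(i, j)
  match unlift ord0 i, unlift ord0 j with
  | Some i', Some j' => (a (time x) ^+ 2)^-1 * invmx (gmx gs (spat x)) i' j'
  | None, None => -1
  | _, _ => 0
  end.

Lemma frw_mulmx_inv : gmx (frw a gs) x *m frw_inv = 1%:M.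
Proof.
apply/matrixP => i j; rewrite !mxE big_ord_recl /=.
under eq_bigr => k _ do rewrite !mxE /= liftK.
rewrite !mxE /= unlift_none.
case: (unliftP ord0 i) => [i'|] ->; case: (unliftP ord0 j) => [j'|] ->;
  rewrite ?unlift_none ?liftK ?frw00 ?frw0S ?frwS0 /=.
- under eq_bigr => k _ do rewrite frwSS /= mulrACA mulfV ?expf_neq0 // mul1r.
  rewrite mul0r add0r (inj_eq (@lift_inj _ ord0)).
  have := congr1 (fun M : 'M[R]_3 => M i' j') (mulmxV gs_unit); rewrite !mxE => <-.
  by apply: eq_bigr => k _; rewrite mxE.
- by rewrite big1 ?mul0r ?addr0 // => k _; rewrite mulr0.
- by rewrite big1 ?mulr0 ?addr0 // => k _; rewrite frw0S mul0r.
- by rewrite big1 ?mulrNN ?mulr1 ?addr0 // => k _; rewrite mulr0.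
Qed.

Lemma frw_unitmx : gmx (frw a gs) x \in unitmx.
Proof. by have [] := mulmx1_unit frw_mulmx_inv. Qed.

Lemma ginv_frw0 l : ginv (frw a gs) x ord0 l = - dtime l.
Proof.
have inv_frw : invmx (gmx (frw a gs) x) = frw_inv.
  by rewrite -[RHS]mul1mx -(mulVmx frw_unitmx) -mulmxA frw_mulmx_inv mulmx1.
rewrite /ginv inv_frw mxE unlift_none.
by case: (unliftP ord0 l) => [l'|] ->; rewrite ?liftK ?unlift_none ?dtime0 ?dtimeS ?oppr0.
Qed.

Lemma Gam_frw0 j k :
  Gam (frw a gs) ord0 j k x = Hub a (time x) * (frw a gs j k x + dtime j * dtime k).
Proof.
rewrite /Gam.
under eq_bigr => l _ do rewrite ginv_frw0 mulNr mulrC -mulNr.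
by rewrite sum_mul_dtime !pd_frw0 pd0_frw //; field.
Qed.

Lemma trace_fluid_form (p q : R) :
  \sum_(j < 4) \sum_(k < 4) ginv (frw a gs) x j k *
    (p * (dtime j * dtime k) + q * frw a gs j k x) = 4%:R * q - p.
Proof.
under eq_bigr => j _ do (under eq_bigr => k _ do
  rewrite mulrDr mulrCA [ginv _ _ _ _ * (q * _)]mulrCA).
under eq_bigr => j _ do rewrite big_split /= -!mulr_sumr.
rewrite big_split /= -!mulr_sumr sum_mul_dtime2 ginv_frw0 dtime0.
rewrite sum_ginv_g; [by ring | exact: frw_unitmx |].
by move=> i j; rewrite (frw_sym _ _ gs_sym i j).
Qed.

Lemma box_frw_time : box (frw a gs) (@time R) x = -3 * Hub a (time x).
Proof.
have covD1_dtime j k : covD1 (frw a gs) (fun k => pd k (@time R)) j k x =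
    - Hub a (time x) * (dtime j * dtime k) + - Hub a (time x) * frw a gs j k x.
  rewrite /covD1 /=.
  have -> : pd k (@time R) = fun _ => dtime k by apply: funext => y; rewrite pd_time.
  under eq_bigr => m _ do rewrite pd_time.
  by rewrite /pd derive_cst sub0r sum_mul_dtime Gam_frw0 -mulNr mulrDr addrC.
rewrite /box.
under eq_bigr => j _ do (under eq_bigr => k _ do rewrite covD1_dtime).
by rewrite trace_fluid_form; ring.
Qed.

End FRWAtPoint.

Definition fluid_tensor {R : realType} (a : R -> R) (gs : metric R 3) (P Q : R -> R)
  (m n : 'I_4) (w : 'rV[R]_4) : R :=
  P (time w) * (dtime m * dtime n) + Q (time w) * frw a gs m n w.

Section FluidTensor.
Context {R : realType} (a : R -> R) (gs : metric R 3) (P Q : R -> R).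
Hypothesis gs_sym : forall i j y, gs i j y = gs j i y.

Lemma fluid_tensor_sym m n w : fluid_tensor a gs P Q m n w = fluid_tensor a gs P Q n m w.
Proof. by rewrite /fluid_tensor (mulrC (dtime m)) (frw_sym _ _ gs_sym m n). Qed.

Variable x : 'rV[R]_4.
Hypothesis da : derivable a (time x) 1.
Hypothesis a_neq0 : a (time x) != 0.
Hypothesis gs_unit : gmx gs (spat x) \in unitmx.
Hypothesis dgs : forall i j k, derivable (gs i j) (spat x) (ei k).
Hypothesis dP : derivable P (time x) 1.
Hypothesis dQ : derivable Q (time x) 1.

Lemma pd_fluid k l j : pd j (fluid_tensor a gs P Q k l) x =
  dtime j * 'D_1 P (time x) * (dtime k * dtime l)
  + (Q (time x) * pd j (frw a gs k l) x + frw a gs k l x * (dtime j * 'D_1 Q (time x))).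
Proof.
have [EP DP] := pd_comp_time P j x dP.
have [EQ DQ] := pd_comp_time Q j x dQ.
have Dg := derivable_frw a gs k l j x da dgs.
rewrite /pd /fluid_tensor deriveD; last 2 first.
- by apply: derivableM_fun => //; exact: derivable_cst.
- exact: derivableM_fun.
rewrite (deriveM_fun DP (derivable_cst _ _ _)) (deriveM_fun DQ Dg).
rewrite /pd in EP EQ.
by rewrite EP EQ derive_cst mulr0 add0r /cst mulrC.
Qed.

Lemma sum_mul_fluid (c : 'I_4 -> R) l :
  \sum_(m < 4) c m * fluid_tensor a gs P Q m l x =
  P (time x) * (c ord0 * dtime l) + Q (time x) * \sum_(m < 4) c m * frw a gs m l x.
Proof.
rewrite /fluid_tensor.
under eq_bigr => m _ do rewrite mulrDr mulrCA [c m * (Q _ * _)]mulrCA.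
rewrite big_split /= -!mulr_sumr; congr (_ * _ + _).
under eq_bigr => m _ do rewrite mulrCA mulrC.
exact: (sum_mul_dtime (fun m => c m * dtime l)).
Qed.

Lemma covD2_fluid j k l : covD2 (frw a gs) (fluid_tensor a gs P Q) j k l x =
  dtime j * ('D_1 P (time x) * (dtime k * dtime l) + 'D_1 Q (time x) * frw a gs k l x)
  - P (time x) * Hub a (time x) *
    ((frw a gs j k x + dtime j * dtime k) * dtime l
     + (frw a gs j l x + dtime j * dtime l) * dtime k).
Proof.
have g_unit := frw_unitmx a gs x a_neq0 gs_unit.
have g_sym m n : frw a gs m n x = frw a gs n m x by rewrite (frw_sym _ _ gs_sym m n).
rewrite /covD2 pd_fluid big_split /= sum_mul_fluid.
under eq_bigr => m _ do rewrite fluid_tensor_sym.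
rewrite sum_mul_fluid !sum_Gam_g // !Gam_frw0 //.
rewrite !(frw_sym _ _ gs_sym l k) !(frw_sym _ _ gs_sym l j) (frw_sym _ _ gs_sym k j).
by field.
Qed.

End FluidTensor.

Section HubbleRate.
Context {R : realType} (a : R -> R).

Definition Hub_deriv (s : R) : R :=
  derive1 a s * (- (a s ^+ 2)^-1 * derive1 a s) + (a s)^-1 * derive1 (derive1 a) s.

Section AtTime.
Variable t : R.
Hypotheses (da : derivable a t 1) (da' : derivable (derive1 a) t 1) (a_neq0 : a t != 0).

Lemma derivable_Hub : derivable (Hub a) t 1.
Proof. exact: derivableM_fun (derivableV a_neq0 da). Qed.

Lemma derive_Hub : 'D_1 (Hub a) t = Hub_deriv t.
Proof.
rewrite (deriveM_fun da' (derivableV a_neq0 da)) (deriveV a_neq0 da).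
by rewrite /Hub_deriv !derive1E.
Qed.

Lemma derivable_Hub_deriv : derivable (derive1 (derive1 a)) t 1 -> derivable Hub_deriv t 1.
Proof.
move=> da''.
have da2 : derivable (fun s => a s * a s) t 1 by exact: derivableM_fun.
have da2_neq0 : a t * a t != 0 by rewrite mulf_neq0.
have -> : Hub_deriv = fun s => derive1 a s * (- (a s * a s)^-1 * derive1 a s)
                               + (a s)^-1 * derive1 (derive1 a) s.
  by apply: funext => s; rewrite /Hub_deriv expr2.
have dinv2 := derivableN_fun (@derivableV _ _ (fun s => a s * a s) t 1 da2_neq0 da2).
exact: derivableD_fun (derivableM_fun da' (derivableM_fun dinv2 da'))
                      (derivableM_fun (derivableV a_neq0 da) da'').
Qed.

End AtTime.

Lemma derivable_Hdot {I : set R} {t} : open I -> I t ->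
  (forall s, I s -> [/\ derivable a s 1, derivable (derive1 a) s 1 & a s != 0]) ->
  derivable (derive1 (derive1 a)) t 1 -> derivable (Hdot a) t 1.
Proof.
move=> oI It aI da''.
have Hdot_near : \forall h \near 0, Hdot a (h *: 1 + t) = Hub_deriv (h *: 1 + t).
  apply: filterS (open_near_line (1 : R) oI It) => h Ih; have [d1 d2 d3] := aI _ Ih.
  by rewrite /Hdot derive1E derive_Hub.
have [_ ->] := derive_near_line Hdot_near.
have [d1 d2 d3] := aI _ It.
exact: derivable_Hub_deriv.
Qed.

End HubbleRate.

Section MimeticFRW.
Context {R : realType} (I : set R) (U : set 'rV[R]_3) (a zeta V : R -> R) (gam : R)
  (gs : metric R 3).
Hypotheses (oI : open I) (oU : open U) (a_gt0 : forall t, I t -> 0 < a t).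
Hypotheses (sa : smooth1_on I a) (szeta : smooth1_on I zeta) (sV : smooth1_on I V).
Hypothesis sgs : forall i j, smooth_on U (gs i j).
Hypothesis gs_sym : forall i j y, gs i j y = gs j i y.
Hypothesis gs_posdef : forall y, U y -> forall v : 'rV[R]_3, v != 0 ->
  0 < (v *m gmx gs y *m v^T) 0 0.

Let D := [set x : 'rV[R]_4 | I (time x) /\ U (spat x)].
Let g := frw a gs.
Let X := Xmim g (@time R) gam V zeta.

Lemma a_regular s : I s -> [/\ derivable a s 1, derivable (derive1 a) s 1 & a s != 0].
Proof. by move=> Is; split; [exact: (sa 0) | exact: (sa 1) | rewrite gt_eqF ?a_gt0]. Qed.

Lemma frw_regular {x} : D x ->
  [/\ derivable a (time x) 1, a (time x) != 0, gmx gs (spat x) \in unitmx &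
      forall i j k, derivable (gs i j) (spat x) (ei k)].
Proof.
move=> [Ix Ux]; have [da _ a_neq0] := a_regular _ Ix; split => //.
- exact/posdef_unitmx/gs_posdef.
- by move=> i j k; have [+ _] := sgs i j [::] _ Ux; apply.
Qed.

Lemma D_near_line {x} j : D x -> \forall h \near 0, D (h *: ei j + x).
Proof.
move=> [Ix Ux].
have I_near := open_near_line (dtime j) oI Ix.
have U_near : \forall h \near (0 : R), U (spat (h *: ei j + x)).
  case: (unliftP ord0 j) => [j'|] ->.
  - by apply: filterS (open_near_line (ei j') oU Ux) => h; rewrite spat_shiftS.
  - by apply: filterS (open_near_line 0 oU Ux) => h _; rewrite spat_shift0.
by apply: filterS2 I_near U_near => h Ih Uh; split; rewrite ?time_shift.
Qed.

Lemma derivable_Hdot_on {s} : I s -> derivable (Hdot a) s 1.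
Proof. by move=> Is; apply: (derivable_Hdot a oI Is a_regular); exact: (sa 2). Qed.

Lemma pd_box_time x p : D x ->
  pd p (box g (@time R)) x = dtime p * (-3 * Hdot a (time x)).
Proof.
move=> Dx.
have box_near : \forall h \near 0, box g (@time R) (h *: ei p + x) =
    -3 * Hub a (time (h *: ei p + x)).
  apply: filterS (D_near_line p Dx) => h Dh; have [d1 d2 d3 _] := frw_regular Dh.
  exact: box_frw_time.
rewrite /pd (@derive_near_line _ _ _ (fun w => -3 * Hub a (time w)) _ _ box_near).1.
have [da da' a_neq0] := a_regular _ Dx.1.
have dHub := derivable_Hub _ _ da da' a_neq0.
have d3Hub := derivableM_fun (derivable_cst (-3 : R) (time x) 1) dHub.
have [+ _] := pd_comp_time _ p x d3Hub; rewrite /pd => ->.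
by rewrite (deriveM_fun (derivable_cst (-3 : R) (time x) 1) dHub) derive_cst
  mulr0 addr0 /Hdot derive1E.
Qed.

Lemma Xmim_frw x k l : D x ->
  X k l x = 2 * (zeta (time x) + 3 * gam * Hdot a (time x)) * ucov k x * ucov l x
            + (V (time x) + 3 * gam * Hdot a (time x)) * g k l x.
Proof.
move=> Dx; have [_ a_neq0 gs_unit _] := frw_regular Dx.
rewrite /X /Xmim /ucov !pd_time !pd_box_time //.
under eq_bigr => p _ do (under eq_bigr => q _ do
  rewrite pd_box_time // pd_time -mulrA mulrAC mulrA).
under eq_bigr => p _ do rewrite -mulr_suml.
rewrite -mulr_suml (sum_mul_dtime2 (fun p q => ginv g x p q)) ginv_frw0 // dtime0.
by ring.
Qed.

Let P s := 2 * (zeta s + 3 * gam * Hdot a s).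
Let Q s := V s + 3 * gam * Hdot a s.
Let B s := 3^-1 * (2 * zeta s - V s + 3 * gam * Hdot a s).

Lemma Xmim_fluid x k l : D x -> X k l x = fluid_tensor a gs P Q k l x.
Proof. by move=> Dx; rewrite Xmim_frw // /fluid_tensor /ucov !pd_time /P /Q /g; ring. Qed.

Lemma derivable_fluid_coefs {s} : I s ->
  [/\ derivable P s 1, derivable Q s 1 & derivable B s 1].
Proof.
move=> Is.
have dzeta : derivable zeta s 1 := szeta 0 s Is.
have dV : derivable V s 1 := sV 0 s Is.
have dH := derivableM_fun (derivable_cst (3 * gam) s 1) (derivable_Hdot_on Is).
split.
- exact: derivableM_fun (derivable_cst (2 : R) s 1) (derivableD_fun dzeta dH).
- exact: derivableD_fun dV dH.
- apply: derivableM_fun (derivable_cst (3^-1 : R) s 1) (derivableD_fun _ dH).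
  exact: derivableD_fun (derivableM_fun (derivable_cst (2 : R) s 1) dzeta)
                        (derivableN_fun dV).
Qed.

Lemma derive_B {s} : I s -> 'D_1 B s = 3^-1 * ('D_1 P s - 'D_1 Q s).
Proof.
move=> Is; have [dP dQ _] := derivable_fluid_coefs Is.
have -> : B = fun r => 3^-1 * (P r - Q r) by apply: funext => r; rewrite /B /P /Q; ring.
rewrite (deriveM_fun (derivable_cst (3^-1 : R) s 1) (derivableD_fun dP (derivableN_fun dQ))).
by rewrite derive_cst mulr0 addr0 /cst (deriveB dP dQ).
Qed.

Lemma covD2_Xmim x j k : D x -> covD2 g X j k ord0 x =
  ('D_1 P (time x) - 'D_1 Q (time x) - P (time x) * Hub a (time x)) * (dtime j * dtime k)
  + - (P (time x) * Hub a (time x)) * g j k x.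
Proof.
move=> Dx; have [da a_neq0 gs_unit dgs] := frw_regular Dx.
have [dP dQ _] := derivable_fluid_coefs Dx.1.
have -> : covD2 g X j k ord0 x = covD2 g (fluid_tensor a gs P Q) j k ord0 x.
  apply: covD2_near_line => [m n|]; first exact: Xmim_fluid.
  by apply: filterS (D_near_line j Dx) => h; exact: Xmim_fluid.
by rewrite covD2_fluid // dtime0 !frw_k0 /g; ring.
Qed.

Let C k l x :=
  2 * (zeta (time x) + 3 * gam * Hdot a (time x)) * ucov k x * ucov l x
  + 3^-1 * (2 * zeta (time x) - V (time x) + 3 * gam * Hdot a (time x)) * g k l x.

Lemma C_fluid x k l : C k l x = fluid_tensor a gs P B k l x.
Proof. by rewrite /C /fluid_tensor /ucov !pd_time /P /B /g; ring. Qed.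

Lemma Xmim_trace x k l : D x -> X k l x = C k l x - g k l x * trace2 g C x.
Proof.
move=> Dx; have [_ a_neq0 gs_unit _] := frw_regular Dx.
rewrite /trace2; under eq_bigr => r _ do (under eq_bigr => s _ do rewrite C_fluid /fluid_tensor).
by rewrite trace_fluid_form // Xmim_fluid // C_fluid /fluid_tensor /P /Q /B /g; field.
Qed.

Hypothesis divX : divfree_on g X D.

Lemma derive_P_sub_Q x : D x ->
  'D_1 P (time x) - 'D_1 Q (time x) = -3 * (P (time x) * Hub a (time x)).
Proof.
move=> Dx; have [_ a_neq0 gs_unit _] := frw_regular Dx.
have := divX ord0 x Dx.
under eq_bigr => j _ do (under eq_bigr => k _ do rewrite covD2_Xmim //).
rewrite trace_fluid_form // => div0.
by apply/eqP; rewrite -subr_eq0 -oppr_eq0 -div0; apply/eqP; ring.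
Qed.

Lemma derive_B_Hub x : D x -> 'D_1 B (time x) = - (P (time x) * Hub a (time x)).
Proof.
move=> Dx; rewrite (derive_B Dx.1) derive_P_sub_Q //.
by field.
Qed.

Lemma codazzi_C : codazzi_on g C D.
Proof.
move=> j k l x Dx; have [da a_neq0 gs_unit dgs] := frw_regular Dx.
have [dP _ dB] := derivable_fluid_coefs Dx.1.
have C_eq j' k' l' : covD2 g C j' k' l' x = covD2 g (fluid_tensor a gs P B) j' k' l' x.
  apply: covD2_near_line => [m n|]; first exact: C_fluid.
  by apply: filterS (D_near_line j' Dx) => h _; exact: C_fluid.
rewrite !C_eq !covD2_fluid // derive_B_Hub //.
by rewrite (frw_sym _ _ gs_sym k j) /g; field.
Qed.

End MimeticFRW.

Theorem mainTheorem11 (R : realType)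
  (I : set R) (U : set 'rV[R]_3)
  (a zeta V : R -> R) (gam : R) (gs : metric R 3) :
  open I -> open U ->
  (forall t, I t -> 0 < a t) ->
  smooth1_on I a -> smooth1_on I zeta -> smooth1_on I V ->
  (forall i j, smooth_on U (gs i j)) ->
  (forall i j y, gs i j y = gs j i y) ->
  (forall y, U y -> forall v : 'rV[R]_3, v != 0 ->
      0 < (v *m gmx gs y *m v^T) 0 0) ->
  const_curvature gs U ->
  let D := [set x : 'rV[R]_4 | I (time x) /\ U (spat x)] in
  let g := frw a gs in
  let X := Xmim g (@time R) gam V zeta in
  divfree_on g X D ->
  let C := fun (k l : 'I_4) (x : 'rV[R]_4) =>
     2 * (zeta (time x) + 3 * gam * Hdot a (time x)) * ucov k x * ucov l x
     + 3^-1 * (2 * zeta (time x) - V (time x) + 3 * gam * Hdot a (time x)) * g k l x in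
  (forall k l x, D x ->
     X k l x = 2 * (zeta (time x) + 3 * gam * Hdot a (time x)) * ucov k x * ucov l x
               + (V (time x) + 3 * gam * Hdot a (time x)) * g k l x)
  /\ codazzi_on g C D
  /\ (forall k l x, D x -> X k l x = C k l x - g k l x * trace2 g C x).
Proof.
move=> oI oU a_gt0 sa szeta sV sgs gs_sym gs_posdef _ D g X divX C.
split; [|split].
- by move=> k l x; apply: Xmim_frw.
- exact: codazzi_C.
- by move=> k l x; apply: Xmim_trace.
Qed.
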